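(* Consider one-sided matching with $n$ agents, $n$ items and unit-sum valuations. The best possible distortion of a deterministic ordinal matching algorithm is $\Theta(n^2)$. More precisely: (i) every ordinal algorithm whose output matches at least one agent to her top-ranked item has distortion at most $n^2$; (ii) every deterministic ordinal algorithm has distortion $\Omega(n^2)$.
   Context: One-sided matching: there is a set $N$ of $n$ agents and a set $A$ of $n$ items. Each agent $i$ has a valuation function $v_i:A\to\mathbb{R}_{\ge 0}$. Valuations are unit-sum if $\sum_{j\in A}v_i(j)=1$ for every agent $i$. A profile $\mathbf v=(v_i)_{i\in N}$ induces an ordinal profile $\succ_{\mathbf v}=(\succ_i)_{i\in N}$, where each $\succ_i$ is a strict ranking of $A$ consistent with $v_i$ (if $a\succ_i b$ then $v_i(a)\ge v_i(b)$). A matching $Y=(y_i)_{i\in N}$ is a bijection from $N$ to $A$. Its social welfare is $\mathrm{SW}(Y\mid\mathbf v)=\sum_{i\in N}v_i(y_i)$. $X(\mathbf v)$ denotes a matching of maximum social welfare. A deterministic matching algorithm making $k$ queries per agent receives $\succ_{\mathbf v}$ as input. It may adaptively make value queries, where a query $(i,j)$ returns $v_i(j)$, with at most $k$ queries per agent. It outputs a matching $\mathcal A(\succ_{\mathbf v})$. An ordinal algorithm is one with $k=0$. The distortion of an algorithm over a class of valuations is $\sup_{\mathbf v}\mathrm{SW}(X(\mathbf v)\mid\mathbf v)/\mathrm{SW}(\mathcal A(\succ_{\mathbf v})\mid\mathbf v)$, where the supremum is over all profiles in the class. *)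

From mathcomp Require Import all_boot all_order all_algebra all_fingroup.
Set Implicit Arguments. Unset Strict Implicit. Unset Printing Implicit Defensive.
Import Order.TTheory GRing.Theory Num.Theory.
Local Open Scope ring_scope.

(* Agents and items are both 'I_n.
   A valuation profile: v i j = v_i(j). *)
Definition valuation (R : realFieldType) (n : nat) := 'I_n -> 'I_n -> R.

Definition unit_sum (R : realFieldType) (n : nat) (v : valuation R n) : Prop :=
  (forall i j, 0 <= v i j) /\ (forall i, \sum_(j < n) v i j = 1).

(* A strict ranking of the items is a bijection  item -> rank position
   (rank 0 = top). An ordinal profile gives one ranking per agent. *)
Definition ranking (n : nat) := {perm 'I_n}.
Definition ordinal_profile (n : nat) := {ffun 'I_n -> ranking n}.

Definition consistent (R : realFieldType) (n : nat) (v : valuation R n)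
  (p : ordinal_profile n) : Prop :=
  forall i a b : 'I_n, (p i a < p i b)%N -> v i b <= v i a.

Definition matching (n : nat) := {perm 'I_n}.

Definition SW (R : realFieldType) (n : nat) (Y : matching n) (v : valuation R n) : R :=
  \sum_(i < n) v i (Y i).

Definition opt_SW (R : realFieldType) (n : nat) (v : valuation R n) : R :=
  \big[Num.max/0]_(Y : matching n) SW Y v.

Definition ordinal_algorithm (n : nat) := ordinal_profile n -> matching n.

Definition distortion_le (R : realFieldType) (n : nat) (A : ordinal_algorithm n)
  (D : R) : Prop :=
  forall (v : valuation R n) (p : ordinal_profile n),
    unit_sum v -> consistent v p -> opt_SW v <= D * SW (A p) v.

Definition matches_some_top (n : nat) (A : ordinal_algorithm n) : Prop :=
  forall p : ordinal_profile n, exists i : 'I_n, (p i (A p i) = 0 :> nat).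

From mathcomp Require Import all_boot all_order all_algebra all_fingroup.
From mathcomp Require Import zify lra.
Import Order.TTheory GRing.Theory Num.Theory.
Set Implicit Arguments. Unset Strict Implicit.
Local Open Scope ring_scope.

(* With unit-sum valuations every matching has welfare at most
   n, so OPT <= n.  If agent i receives her top item a, consistency gives
   v_i(a) >= v_i(b) for every item b, hence v_i(a) >= 1/n, and the output
   has welfare at least 1/n: the ratio is at most n^2.

   In the hard profile every agent ranks item
   0 first and item [second i] = max(i, n-1-i) second; agents i and n-1-i
   share their second choice.  Against the output Y of any algorithm, the
   adversary gives each agent the uniform valuation on an upper segment of
   her ranking: on all items if Y i = 0, on {0} if Y i = second i, and on
   {0, second i} otherwise ("misplaced" agents).  Then SW(Y) = 1/n.  Since
   Y is injective and second is invariant under i |-> n-1-i, at most about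
   n/2 agents receive their second choice, so about n/2 agents are
   misplaced.  Each misplaced agent values 1/2 either her own index or its
   mirror, so the identity or the reversal matching has welfare >= #misplaced
   / 4 >= (n-3)/8.  The distortion is thus >= n(n-3)/8 >= n^2/16. *)

Lemma SW_le_opt (R : realFieldType) n (v : valuation R n) (Y : matching n) :
  SW Y v <= opt_SW v.
Proof. exact: (le_bigmax (0 : R) (fun Z => SW Z v) Y). Qed.

Lemma value_le1 (R : realFieldType) n (v : valuation R n) :
  unit_sum v -> forall i j, v i j <= 1.
Proof.
move=> [v_ge0 v_sum] i j; rewrite -(v_sum i) (bigD1 j) //= lerDl.
exact: sumr_ge0.
Qed.

Lemma opt_SW_le_n (R : realFieldType) n (v : valuation R n) :
  unit_sum v -> opt_SW v <= n%:R.
Proof.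
move=> hv; apply: bigmax_le => // Y _.
rewrite /SW -[n in n%:R]card_ord -sumr_const.
by apply: ler_sum => i _; apply: value_le1.
Qed.

Lemma top_value_lb (R : realFieldType) n (v : valuation R n)
    (p : ordinal_profile n) (i a : 'I_n) :
  unit_sum v -> consistent v p -> (p i a = 0 :> nat) -> 1 <= n%:R * v i a.
Proof.
move=> [_ v_sum] hc top_a.
rewrite mulr_natl -[n in _ *+ n]card_ord -sumr_const -(v_sum i).
apply: ler_sum => b _; case: (eqVneq b a) => [-> //|b_neq_a].
apply: hc; rewrite top_a lt0n; apply: contra_neq b_neq_a => pb0.
by apply: (@perm_inj _ (p i)); apply: val_inj; rewrite /= pb0 top_a.
Qed.

Lemma value_le_SW (R : realFieldType) n (v : valuation R n) (Y : matching n) i :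
  unit_sum v -> v i (Y i) <= SW Y v.
Proof. by move=> [v_ge0 _]; rewrite /SW (bigD1 i) //= lerDl sumr_ge0. Qed.

Lemma upper_bound (R : realFieldType) n (A : ordinal_algorithm n) :
  matches_some_top A -> distortion_le A ((n ^ 2)%N%:R : R).
Proof.
move=> hA v p hv hc; have [i top_i] := hA p.
have lb := top_value_lb hv hc top_i.
have SW_ge := value_le_SW (A p) i hv.
have n_ge0 : (0 : R) <= n%:R by [].
apply: le_trans (opt_SW_le_n hv) _.
rewrite natrX expr2 -mulrA -[X in X <= _]mulr1 ler_wpM2l //.
exact: le_trans lb (ler_wpM2l n_ge0 SW_ge).
Qed.

Section UniformValuation.
Variables (R : realFieldType) (n : nat).

Definition uniform_on (S : {set 'I_n}) (j : 'I_n) : R := (j \in S)%:R / #|S|%:R.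

Lemma uniform_on_ge0 (S : {set 'I_n}) j : 0 <= uniform_on S j.
Proof. by rewrite divr_ge0. Qed.

Lemma uniform_on_in (S : {set 'I_n}) j : j \in S -> uniform_on S j = #|S|%:R^-1.
Proof. by rewrite /uniform_on => ->; rewrite mul1r. Qed.

Lemma uniform_on_out (S : {set 'I_n}) j : j \notin S -> uniform_on S j = 0.
Proof. by rewrite /uniform_on => /negbTE ->; rewrite mul0r. Qed.

Lemma uniform_on_sum (S : {set 'I_n}) :
  S != set0 -> \sum_(j < n) uniform_on S j = 1.
Proof.
move=> S_neq0; rewrite (bigID (mem S)) /= [X in _ + X]big1 ?addr0; last first.
  by move=> j jS; rewrite uniform_on_out.
rewrite (eq_bigr (fun=> #|S|%:R^-1)) => [|j jS]; last by rewrite uniform_on_in.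
by rewrite sumr_const -[_ *+ _]mulr_natr mulVf // pnatr_eq0 cards_eq0.
Qed.

Lemma uniform_on_mono (r : ranking n) (S : {set 'I_n}) :
  (forall a b, (r a < r b)%N -> b \in S -> a \in S) ->
  forall a b, (r a < r b)%N -> uniform_on S b <= uniform_on S a.
Proof.
move=> S_upper a b ab; case: (boolP (b \in S)) => bS; last first.
  by rewrite uniform_on_out ?uniform_on_ge0.
by rewrite !uniform_on_in // (S_upper a b).
Qed.

End UniformValuation.

Section LowerBound.
Variable m : nat.
Local Notation n := m.+2.

(* Second choice of agent i in the hard profile: the larger of i and its
   mirror n-1-i.  It is never item 0 and agents i, n-1-i share it. *)
Definition second (i : 'I_n) : 'I_n :=
  if (i <= rev_ord i)%N then rev_ord i else i.

Lemma second_val i : (second i : nat) = maxn i (rev_ord i).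
Proof. by rewrite /second /maxn; case: ltngtP. Qed.

Lemma second_neq0 i : second i != ord0.
Proof. by rewrite -val_eqE /= second_val /=; have := ltn_ord i; lia. Qed.

Lemma second_rev i : second (rev_ord i) = second i.
Proof. by apply: val_inj; rewrite /= !second_val rev_ordK maxnC. Qed.

Lemma second_cases i : second i = i \/ second i = rev_ord i.
Proof. by rewrite /second; case: ifP; [right | left]. Qed.

Lemma rev_ord_fixed_uniq (i j : 'I_n) :
  rev_ord i = i -> rev_ord j = j -> i = j.
Proof.
move=> /(congr1 val) /= hi /(congr1 val) /= hj; apply: ord_inj; lia.
Qed.

Definition hits (Y : matching n) : {set 'I_n} := [set i | Y i == second i].

Definition misplaced (Y : matching n) : {set 'I_n} :=
  [set i | (Y i != ord0) && (Y i != second i)].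

(* Two mirror agents cannot both receive their common second choice, so
   hits Y and its mirror image overlap in at most the fixed point. *)
Lemma card_hits Y : (2 * #|hits Y| <= n.+1)%N.
Proof.
have card_rev : #|@rev_ord n @: hits Y| = #|hits Y|.
  by rewrite card_imset //; exact: rev_ord_inj.
have fixed_rev i : i \in hits Y :&: @rev_ord n @: hits Y -> rev_ord i = i.
  rewrite !inE => /andP [/eqP Yi /imsetP [j]]; rewrite inE => /eqP Yj def_i.
  rewrite def_i rev_ordK; apply: (@perm_inj _ Y).
  by rewrite Yj -def_i Yi def_i second_rev.
have card_cap : (#|hits Y :&: @rev_ord n @: hits Y| <= 1)%N.
  apply/card_le1_eqP => i j /fixed_rev fi /fixed_rev fj.
  exact: rev_ord_fixed_uniq.
have card_cup : (#|hits Y :|: @rev_ord n @: hits Y| <= n)%N.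
  by rewrite -[n in (_ <= n)%N]card_ord max_card.
have := cardsUI (hits Y) (@rev_ord n @: hits Y); rewrite card_rev; lia.
Qed.

Lemma card_misplaced Y : (n.-1 <= #|misplaced Y| + #|hits Y|)%N.
Proof.
have cover : [set~ (Y^-1)%g ord0] \subset misplaced Y :|: hits Y.
  apply/subsetP => i; rewrite !inE => i_neq.
  case: (eqVneq (Y i) (second i)) => _; rewrite ?orbT ?andbT ?orbF //.
  by apply: contra_neq i_neq => Yi0; rewrite -Yi0 permK.
have := subset_leq_card cover; rewrite cardsC1 card_ord.
have := cardsUI (misplaced Y) (hits Y); lia.
Qed.

Definition item1 : 'I_n := Ordinal (isT : (1 < n)%N).

(* Agent i ranks item 0 first and [second i] second. *)
Definition hard_profile : ordinal_profile n :=
  [ffun i => tperm item1 (second i)].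

Lemma hard_profile_top i a : ((hard_profile i a : nat) == 0%N) = (a == ord0).
Proof.
have fix0 : hard_profile i ord0 = ord0 by rewrite ffunE tpermD ?second_neq0.
by rewrite -[0%N]/(nat_of_ord (@ord0 m.+1)) val_eqE -{1}fix0 (inj_eq perm_inj).
Qed.

Lemma hard_profile_ord0 i : (hard_profile i ord0 : nat) = 0%N.
Proof. by apply/eqP; rewrite hard_profile_top. Qed.

Lemma hard_profile_second i : (hard_profile i (second i) : nat) = 1%N.
Proof. by rewrite ffunE tpermR. Qed.

Definition support (Y : matching n) (i : 'I_n) : {set 'I_n} :=
  if Y i == ord0 then [set: 'I_n]
  else if Y i == second i then [set ord0] else [set ord0; second i].

Lemma support_upper Y i a b :
  (hard_profile i a < hard_profile i b)%N ->
  b \in support Y i -> a \in support Y i.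
Proof.
move=> ab; rewrite /support; case: ifP => _; first by rewrite inE.
have a_top : (hard_profile i b <= 1)%N -> a = ord0.
  by move=> b_le1; apply/eqP; rewrite -(hard_profile_top i); apply/eqP; lia.
case: ifP => _; rewrite !inE.
  by move=> /eqP b0; move: ab; rewrite b0 hard_profile_ord0.
case/orP=> /eqP b_def; rewrite a_top ?eqxx // b_def.
  by rewrite hard_profile_ord0.
by rewrite hard_profile_second.
Qed.

Variable R : realFieldType.

Definition adversary (Y : matching n) : valuation R n :=
  fun i => uniform_on R (support Y i).

Lemma ord0_in_support Y i : ord0 \in support Y i.
Proof.
by rewrite /support; case: ifP => _; [|case: ifP => _]; rewrite !inE ?eqxx.
Qed.

Lemma adversary_unit_sum Y : unit_sum (adversary Y).
Proof.
split=> [i j|i]; first exact: uniform_on_ge0.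
by apply: uniform_on_sum; apply/set0Pn; exists ord0; exact: ord0_in_support.
Qed.

Lemma adversary_consistent Y : consistent (adversary Y) hard_profile.
Proof. by move=> i; apply: uniform_on_mono => a b; exact: support_upper. Qed.

Lemma adversary_own Y i : adversary Y i (Y i) = (Y i == ord0)%:R / n%:R.
Proof.
rewrite /adversary /support; case: (eqVneq (Y i) ord0) => [->|Yi_neq0].
  by rewrite uniform_on_in ?inE // cardsT card_ord mul1r.
rewrite mul0r uniform_on_out //.
case: (eqVneq (Y i) (second i)) => [->|Yi_neq2].
  by rewrite inE second_neq0.
by rewrite !inE negb_or Yi_neq0.
Qed.

Lemma SW_adversary Y : SW Y (adversary Y) = n%:R^-1.
Proof.
rewrite /SW (eq_bigr _ (fun i _ => adversary_own Y i)) -mulr_suml.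
rewrite (reindex_inj (@perm_inj _ Y^-1)) /=.
rewrite (bigD1 ord0) //= permKV eqxx big1 ?addr0 ?mul1r // => j.
by rewrite permKV => /negbTE ->.
Qed.

Lemma adversary_misplaced Y i :
  i \in misplaced Y -> adversary Y i (second i) = 2^-1.
Proof.
rewrite inE => /andP [/negbTE Yi_neq0 /negbTE Yi_neq2].
rewrite /adversary /support Yi_neq0 Yi_neq2 uniform_on_in ?inE ?eqxx ?orbT //.
by rewrite cards2 eq_sym second_neq0.
Qed.

(* The matching i |-> n-1-i; with the identity it serves every misplaced
   agent one of her two valued items. *)
Definition reversal : matching n := perm (@rev_ord_inj n).

Lemma misplaced_pair_value Y i : i \in misplaced Y ->
  2^-1 <= adversary Y i i + adversary Y i (rev_ord i).
Proof.
move=> /adversary_misplaced half.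
by case: (second_cases i) half => -> ->; rewrite ?lerDl ?lerDr uniform_on_ge0.
Qed.

(* Averaging the identity and the reversal: OPT >= #misplaced / 4. *)
Lemma opt_adversary_lb Y : #|misplaced Y|%:R / 4 <= opt_SW (adversary Y).
Proof.
have two_matchings :
    #|misplaced Y|%:R / 2 <= SW 1%g (adversary Y) + SW reversal (adversary Y).
  rewrite /SW -big_split /= (bigID (mem (misplaced Y))) /= -[X in X <= _]addr0.
  apply: lerD; last by apply: sumr_ge0 => i _; rewrite addr_ge0 ?uniform_on_ge0.
  rewrite mulrC mulr_natr -sumr_const; apply: ler_sum => i.
  by rewrite perm1 permE; exact: misplaced_pair_value.
have := SW_le_opt (adversary Y) 1%g.
have := SW_le_opt (adversary Y) reversal; lra.
Qed.

Lemma lower_bound (A : ordinal_algorithm n) (d : R) :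
  (6 <= n)%N -> d < 1/16 * (n ^ 2)%N%:R -> ~ distortion_le A d.
Proof.
move=> n_ge6 d_small hD.
set Y := A hard_profile; set opt := opt_SW (adversary Y).
have n_ge6R : (6 : R) <= n%:R by rewrite (ler_nat R 6).
have opt_le : opt * n%:R <= d.
  rewrite -ler_pdivlMr; last by lra.
  have := hD _ _ (adversary_unit_sum Y) (adversary_consistent Y).
  by rewrite SW_adversary.
have opt_ge : (n%:R - 3) / 8 <= opt.
  have : (n <= 2 * #|misplaced Y| + 3)%N.
    by have := card_hits Y; have := card_misplaced Y; lia.
  rewrite -(ler_nat R) !natrD => card_ge.
  by apply: le_trans (opt_adversary_lb Y); lra.
move: d_small; rewrite natrX expr2; nra.
Qed.

End LowerBound.

Theorem theorem1 (R : realFieldType) :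
  (* (i) upper bound n^2 for algorithms matching someone to her top item *)
  (forall (n : nat) (A : ordinal_algorithm n),
      matches_some_top A -> distortion_le A ((n ^ 2)%N%:R : R)) /\
  (* (ii) every deterministic ordinal algorithm has distortion Omega(n^2):
     the distortion is >= c n^2, i.e. no bound d < c n^2 holds *)
  (exists (c : R) (N : nat), 0 < c /\
     forall (n : nat), (N <= n)%N ->
       forall (A : ordinal_algorithm n) (d : R),
         d < c * (n ^ 2)%N%:R -> ~ distortion_le A d).
Proof.
split; first exact: upper_bound.
exists (1/16), 6%N; split; first by lra.
by case=> [|[|m]] // n_ge6 A d; exact: lower_bound.
Qed.
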